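(* The Minimmit protocol (described in the context) satisfies Consistency: in every execution, if $p_i$ and $p_j$ are correct, then for any timeslots $t$ and $t'$, $\text{log}_i(t)$ and $\text{log}_j(t')$ are compatible, i.e. one is a prefix of the other.
   Context: Setting. There are $n$ processors $\Pi=\{p_0,\dots,p_{n-1}\}$ and an integer $f$ with $5f+1\le n$. At most $f$ processors may be corrupted by an adversary during the execution and then behave arbitrarily (Byzantine); processors never corrupted are called correct. Processors communicate over point-to-point authenticated channels; every message is signed by its sender; a PKI validates signatures and $H$ is a collision-resistant hash function; attention is restricted to executions in which the adversary cannot forge signatures or find hash collisions. Time is divided into timeslots $t\in\mathbb{N}_{\ge 0}$ (partial synchrony): a message sent at time $t$ arrives at some time $t'>t$ with $t'\le \max\{\text{GST},t\}+\Delta$, where $\Delta$ is known to the protocol and GST is unknown and chosen by the adversary (who also chooses delivery times subject to this constraint). Clocks of correct processors advance in real time. When a correct processor sends a message to all processors, it regards that message as immediately received by itself. Transactions are unique messages signed by the environment; each timeslot each processor may receive a finite set of transactions. Each processor $p_i$ maintains an append-only log $\text{log}_i$ of distinct transactions, $\text{log}_i(t)$ denoting its value at the end of timeslot $t$. Blocks. $\text{lead}(v):=p_j$ with $j=v \bmod n$. The genesis block is $b_{\text{gen}}=(0,\lambda,\lambda)$ ($\lambda$ the empty sequence), considered finalised at the start. Any other block is a tuple $b=(v,\text{Tr},h)$ signed by $\text{lead}(v)$, with $v\in\mathbb{N}_{\ge1}$ ($b.\text{view}=v$, ''a view $v$ block''), $\text{Tr}=b.\text{Tr}$ a sequence of distinct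 transactions, and $h=b.h$ a hash value; its parent is the block $b'$ with $H(b')=h$. The ancestors of $b$ are $b$ and the ancestors of its parent ($b_{\text{gen}}$ has only itself). Two blocks are inconsistent if neither is an ancestor of the other. To finalise $b$ means: upon obtaining all ancestors of $b$, the processor sets its log to extend the concatenation of $b'.\text{Tr}$ over ancestors $b'$ of $b$ (with duplicates removed). Messages. A vote for $b$ is $(\text{vote},b)$. An M-notarization for $b$ is a set of $2f+1$ votes for $b$ signed by distinct processors; an L-notarization for $b$ is a set of $n-f$ votes for $b$ signed by distinct processors. A nullify$(v)$ message is $(\text{nullify},v)$; a nullification for view $v$ is a set of $2f+1$ nullify$(v)$ messages signed by distinct processors. Local state of each processor: $\mathtt{S}$, the set of all received messages (automatically updated; it contains a block $b$ if it contains any message having $b$ as an entry; initially it contains only $b_{\text{gen}}$ and an M- and L-notarization for $b_{\text{gen}}$); the current view $\mathtt{v}$ (initially 1; a processor enters view $v$ when $\mathtt{v}$ becomes $v$); a timer $\mathtt{T}$ (initially 0, increasing in real time, reset to 0 upon entering a new view); $\mathtt{nullified}$ (initially false) and $\mathtt{notarized}$ (initially $\bot$, a value different from every block). SelectParent$(\mathtt{S},\mathtt{v})$: let $v'<\mathtt{v}$ be greatest such that $\mathtt{S}$ contains an M-notarization for some block of view $v'$; output the lexicographically least such block. ProposeChild$(b,v)$: form a sequence Tr of distinct transactions containing all transactions received and not in $b'.\text{Tr}$ for any ancestor $b'\in\mathtt{S}$ of $b$, and send the block $(v,\text{Tr},H(b))$ to all processors. $\mathtt{S}$ contains a valid proposal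 $b$ for view $v$ if $\mathtt{S}$ contains (i) precisely one block of the form $b=(v,\text{Tr},h)$ signed by $\text{lead}(v)$, (ii) an M-notarization for some $b'$ with $H(b')=h$, say $b'.\text{view}=v'$, and (iii) a nullification for each view in the open interval $(v',v)$. At timeslot $t$ a nullification $N\subseteq\mathtt{S}$ for a view $v$ is new if $\mathtt{S}$ contained no nullification for $v$ at any earlier timeslot and $N$ is lexicographically least among nullifications for $v$ in $\mathtt{S}$; new M-notarizations and new L-notarizations for a block $b$ are defined analogously. Protocol (Minimmit): at every timeslot, correct $p_i$ does, in order: (1) send new nullifications in $\mathtt{S}$ to all processors; (2) send new M- and L-notarizations in $\mathtt{S}$ to all; (3) if $p_i=\text{lead}(\mathtt{v})$, execute ProposeChild(SelectParent$(\mathtt{S},\mathtt{v}),\mathtt{v})$; (4) if $\mathtt{S}$ contains a valid proposal $b$ for view $\mathtt{v}$ and $\mathtt{notarized}=\bot$ and $\mathtt{nullified}=$ false, set $\mathtt{notarized}:=b$ and send $(\text{vote},b)$ to all; (5) if $\mathtt{T}=2\Delta$, $\mathtt{nullified}=$ false and $\mathtt{notarized}=\bot$, set $\mathtt{nullified}:=$ true and send $(\text{nullify},\mathtt{v})$ to all; (6) if $\mathtt{S}$ contains a nullification for $\mathtt{v}$, set $\mathtt{v}:=\mathtt{v}+1$, $\mathtt{nullified}:=$ false, $\mathtt{notarized}:=\bot$; (7) if $\mathtt{S}$ contains an M-notarization for some $b$ with $b.\text{view}=\mathtt{v}$: if $\mathtt{notarized}=\bot$ and $\mathtt{nullified}=$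 false send $(\text{vote},b)$ to all; then set $\mathtt{v}:=\mathtt{v}+1$, $\mathtt{nullified}:=$ false, $\mathtt{notarized}:=\bot$; (8) if $\mathtt{nullified}=$ false, $\mathtt{notarized}\neq\bot$, and $\mathtt{S}$ contains at least $2f+1$ messages signed by distinct processors, each either $(\text{nullify},\mathtt{v})$ or $(\text{vote},b)$ for some $b$ with $b.\text{view}=\mathtt{v}$ and $b\ne\mathtt{notarized}$, then set $\mathtt{nullified}:=$ true and send $(\text{nullify},\mathtt{v})$ to all; (9) if $\mathtt{S}$ contains a new L-notarization for a block $b$, finalise $b$. The logs of correct processors change only through finalisation. *)

(* A symbolic (Dolev-Yao style) model of
   executions of the Minimmit protocol. *)
From Stdlib Require List.
From mathcomp Require Import all_boot.
Set Implicit Arguments. Unset Strict Implicit. Unset Printing Implicit Defensive.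

Section Minimmit.

(* transactions (environment-signed, unique) *)
Variable Tx : eqType.

(* Blocks.  Hashes are symbolic: [HashOf b] is H(b) (collision resistance:
   H is injective), [Junk k] are hash values that are the hash of no block. *)
Inductive block : Type :=
| Gen : block                                   (* b_gen = (0, lambda, lambda) *)
| Blk : nat -> seq Tx -> hashv -> block         (* (v, Tr, h), signed by lead(v) *)
with hashv : Type :=
| HashOf : block -> hashv
| Junk : nat -> hashv.

Definition view (b : block) : nat := if b is Blk v _ _ then v else 0.
Definition btr (b : block) : seq Tx := if b is Blk _ tr _ then tr else [::].
Definition parent (b : block) : option block :=
  match b with Blk _ _ (HashOf b') => Some b' | _ => None end.

Fixpoint anc (b : block) : seq block :=
  match b with
  | Gen => [:: Gen]
  | Blk _ _ h => b :: (match h with HashOf b' => anc b' | Junk _ => [::] end)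
  end.

Fixpoint rooted (b : block) : Prop :=
  match b with
  | Gen => True
  | Blk _ _ (HashOf b') => rooted b'
  | Blk _ _ (Junk _) => False
  end.

Fixpoint wfb (b : block) : Prop :=
  match b with
  | Gen => True
  | Blk v tr h => 0 < v /\ uniq tr /\
                  (match h with HashOf b' => wfb b' | Junk _ => True end)
  end.

(* remove duplicates, keeping the first occurrence *)
Definition undup_first (s : seq Tx) : seq Tx := rev (undup (rev s)).

Definition chainTx (b : block) : seq Tx :=
  undup_first (flatten (map btr (rev (anc b)))).

Definition finupd (X L : seq Tx) : seq Tx := if prefix X L then L else X.

(* Atomic signed messages.  [IBlock b] is signed by lead(view b);
   [IVote j b] = (vote,b) signed by p_j; [INull j v] = (nullify,v) signed by p_j.
   Notarizations / nullifications are sets of such atomic messages. *)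
Inductive item : Type :=
| IBlock : block -> item
| IVote : nat -> block -> item
| INull : nat -> nat -> item.

Definition msg := seq item.
Definition iset := item -> Prop.

Definition wf_item (x : item) : Prop :=
  match x with
  | IBlock b => wfb b
  | IVote j b => wfb b
  | INull j v => True
  end.

Variables n f : nat.

Definition lead (v : nat) : nat := v %% n.

Definition signer_ok (j : nat) : bool := j < n.

(* S contains a message (a block is contained in S if some message of S has
   it as an entry) *)
Definition inS (S : iset) (x : item) : Prop :=
  S x \/ exists b j, x = IBlock b /\ S (IVote j b).
Definition hasBlock (S : iset) (b : block) : Prop := inS S (IBlock b).

Definition signers (P : nat -> Prop) (k : nat) : Prop :=
  exists J : seq nat, [/\ uniq J, size J = k, all (fun j => j < n) J &
                          forall j, j \in J -> P j].

Definition hasM (S : iset) (b : block) : Prop :=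
  signers (fun j => S (IVote j b)) (2 * f + 1).
Definition hasL (S : iset) (b : block) : Prop :=
  signers (fun j => S (IVote j b)) (n - f).
Definition hasN (S : iset) (v : nat) : Prop :=
  signers (fun j => S (INull j v)) (2 * f + 1).

Definition least (P : nat -> Prop) (k : nat) (J : seq nat) : Prop :=
  [/\ sorted ltn J, size J = k, all (fun j => j < n) J,
      (forall j, j \in J -> P j) &
      (forall j, j < n -> P j -> j \notin J -> forall j', j' \in J -> j' < j)].

(* messages sent in steps (1) and (2): new nullifications and new M- and
   L-notarizations ([old] = contents of S at earlier timeslots) *)
Definition out12 (S old : iset) (m : msg) : Prop :=
  (exists w J, [/\ hasN S w, ~ hasN old w,
                 least (fun j => S (INull j w)) (2 * f + 1) J &
                 m = map (fun j => INull j w) J]) \/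
  (exists b J, [/\ hasM S b, ~ hasM old b,
                 least (fun j => S (IVote j b)) (2 * f + 1) J &
                 m = map (fun j => IVote j b) J]) \/
  (exists b J, [/\ hasL S b, ~ hasL old b,
                 least (fun j => S (IVote j b)) (n - f) J &
                 m = map (fun j => IVote j b) J]).

(* SelectParent(S, v) = b, w.r.t. the lexicographic order lexlt on blocks *)
Definition selpar (lexlt : block -> block -> Prop) (S : iset) (v : nat)
  (b : block) : Prop :=
  [/\ hasM S b, view b < v,
      (forall b', hasM S b' -> view b' < v -> view b' <= view b) &
      (forall b', hasM S b' -> view b' = view b -> b' <> b -> lexlt b b')].

(* ProposeChild(SelectParent(S,v), v) creates block B; rtx = all
   transactions received so far *)
Definition propose (lexlt : block -> block -> Prop) (S : iset) (rtx : seq Tx)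
  (v : nat) (B : block) : Prop :=
  exists b Tr, [/\ selpar lexlt S v b, uniq Tr,
    (forall tx, tx \in Tr <->
       (tx \in rtx /\
        ~ exists b', [/\ List.In b' (anc b), hasBlock S b' & tx \in btr b'])) &
    B = Blk v Tr (HashOf b)].

Definition valid (S : iset) (v : nat) (b : block) : Prop :=
  [/\ hasBlock S b, view b = v,
      (forall b', hasBlock S b' -> view b' = v -> b' = b) &
      exists b', [/\ parent b = Some b', hasM S b' &
                     forall w, view b' < w < v -> hasN S w]].

Definition obtained (S : iset) (b : block) : Prop :=
  rooted b /\ forall b', List.In b' (anc b) -> hasBlock S b'.

Definition addo (S : iset) (o : option item) : iset :=
  fun x => S x \/ o = Some x.

Record lstate := LS {
  lS : iset;
  lv : nat;
  lent : nat;                (* timeslot at which the current view was entered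
                                (timer T = t - lent) *)
  lnull : bool;
  lnot : option block;       (* notarized (None = bottom) *)
  lpend : block -> Prop;     (* blocks to be finalised once all ancestors
                                are obtained *)
  llog : seq Tx
}.

Definition init_state : lstate :=
  {| lS := fun x => exists2 j, j < n & x = IVote j Gen;
     lv := 1; lent := 0; lnull := false; lnot := None;
     lpend := fun _ => False; llog := [::] |}.

(* One timeslot t of correct processor p_i: steps (1)-(9) in order.
   pre = state at the end of the previous timeslot, R = messages received at
   t, rtx = transactions received up to t, post = state at the end of t,
   out = messages sent (to all) during t. *)
Definition slot (lexlt : block -> block -> Prop) (Delta i t : nat)
  (pre : lstate) (R : seq msg) (rtx : seq Tx) (post : lstate)
  (out : msg -> Prop) : Prop :=
  let old : iset := fun x => t <> 0 /\ lS pre x in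
  let S1 : iset := fun x => lS pre x \/ exists m, List.In m R /\ List.In x m in
  let v := lv pre in
  exists (prop3 vote4 vote7 : option block) (null5 null8 nd6 nd7 : bool)
         (nt6 nt7 : option block) (v6 e6 v7 e7 : nat) (fl : seq block),
  (* (3) *)
  (if i == lead v then exists B, prop3 = Some B /\ propose lexlt S1 rtx v B
   else prop3 = None) /\
  (let S3 := addo S1 (omap IBlock prop3) in
  (* (4) *)
  let c4 := (exists b, valid S3 v b) /\ lnot pre = None /\ lnull pre = false in
  (c4 -> exists b, valid S3 v b /\ vote4 = Some b) /\
  (~ c4 -> vote4 = None) /\
  (let nt4 := if vote4 is Some b then Some b else lnot pre in
  let S4 := addo S3 (omap (IVote i) vote4) in
  (* (5) *)
  null5 = [&& t - lent pre == 2 * Delta, ~~ lnull pre & ~~ isSome nt4] /\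
  (let nd5 := lnull pre || null5 in
  let S5 := addo S4 (if null5 then Some (INull i v) else None) in
  (* (6) *)
  (hasN S5 v -> [/\ v6 = v.+1, e6 = t, nd6 = false & nt6 = None]) /\
  (~ hasN S5 v -> [/\ v6 = v, e6 = lent pre, nd6 = nd5 & nt6 = nt4]) /\
  (* (7) *)
  let c7 := exists b, view b = v6 /\ hasM S5 b in
  (c7 -> exists b, [/\ view b = v6, hasM S5 b,
            vote7 = (if ~~ isSome nt6 && ~~ nd6 then Some b else None),
            v7 = v6.+1 & [/\ e7 = t, nd7 = false & nt7 = None]]) /\
  (~ c7 -> [/\ vote7 = None, v7 = v6, e7 = e6, nd7 = nd6 & nt7 = nt6]) /\
  (let S7 := addo S5 (omap (IVote i) vote7) in
  (* (8) *)
  let c8 := [/\ nd7 = false, isSome nt7 &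
              signers (fun j => S7 (INull j v7) \/
                                exists b, [/\ S7 (IVote j b), view b = v7 &
                                              nt7 <> Some b]) (2 * f + 1)] in
  (c8 -> null8 = true) /\ (~ c8 -> null8 = false) /\
  (let S8 := addo S7 (if null8 then Some (INull i v7) else None) in
  (* (9) and finalisation *)
  let pend := fun b => lpend pre b \/ (hasL S8 b /\ ~ hasL old b) in
  List.NoDup fl /\
  (forall b, List.In b fl <-> pend b /\ obtained S8 b) /\
  post = {| lS := S8; lv := v7; lent := e7; lnull := nd7 || null8; lnot := nt7;
            lpend := fun b => pend b /\ ~ obtained S8 b;
            llog := foldl (fun L b => finupd (chainTx b) L) (llog pre) fl |} /\
  (forall m, out m <->
     out12 S1 old m \/
     (exists B, prop3 = Some B /\ m = [:: IBlock B]) \/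
     (exists b, vote4 = Some b /\ m = [:: IVote i b]) \/
     (null5 /\ m = [:: INull i v]) \/
     (exists b, vote7 = Some b /\ m = [:: IVote i b]) \/
     (null8 /\ m = [:: INull i v7]))))))).

(* An execution: global stabilisation time, the set of (eventually) corrupted
   processors, transaction inputs, message deliveries (recipient, timeslot),
   local states of processors at the end of each timeslot, messages sent. *)
Record execution := Exec {
  GST : nat;
  corrupt : nat -> bool;
  txin : nat -> nat -> seq Tx;
  deliv : nat -> nat -> seq msg;
  st : nat -> nat -> lstate;
  sent : nat -> nat -> msg -> Prop
}.

Definition correct (E : execution) (j : nat) : Prop := j < n /\ ~~ corrupt E j.

Definition received_tx (E : execution) (i t : nat) : seq Tx :=
  flatten [seq txin E i s | s <- iota 0 t.+1].

Definition sent_before (E : execution) (j t : nat) (x : item) : Prop :=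
  exists t0 m0, [/\ t0 < t, sent E j t0 m0 & List.In x m0].

(* unforgeability of signatures: an item whose signer is correct was sent
   earlier by that signer *)
Definition blk_auth (E : execution) (t : nat) (b : block) : Prop :=
  b = Gen \/ corrupt E (lead (view b)) \/
  sent_before E (lead (view b)) t (IBlock b).

Definition authentic (E : execution) (t : nat) (x : item) : Prop :=
  match x with
  | IBlock b => blk_auth E t b
  | IVote j b => j < n /\ blk_auth E t b /\
                 (b = Gen \/ corrupt E j \/ sent_before E j t (IVote j b))
  | INull j w => j < n /\ (corrupt E j \/ sent_before E j t (INull j w))
  end.

Definition is_execution (lexlt : block -> block -> Prop) (Delta : nat)
  (E : execution) : Prop :=
  [/\ count (corrupt E) (iota 0 n) <= f,
      (forall i t, correct E i ->
         slot lexlt Delta i t (if t is t'.+1 then st E i t' else init_state)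
              (deliv E i t) (received_tx E i t) (st E i t) (sent E i t)),
      (forall i t m, correct E i -> sent E i t m ->
         forall k, k < n -> k <> i ->
         exists t', [/\ t < t', t' <= maxn (GST E) t + Delta &
                        List.In m (deliv E k t')]) &
      (forall k t m x, correct E k -> List.In m (deliv E k t) ->
         List.In x m -> wf_item x /\ authentic E t x)].

End Minimmit.

Definition strict_total_order (T : Type) (lt : T -> T -> Prop) : Prop :=
  [/\ forall x, ~ lt x x,
      forall x y z, lt x y -> lt y z -> lt x z &
      forall x y, x <> y -> lt x y \/ lt y x].

(* Every log of a correct processor is empty or the transaction chain of a block
   that is L-notarized (n - f votes) in the state of some correct processor, so it
   suffices that two such blocks lie on one chain.  Votes and nullifies of correct
   processors found in the state of a correct processor were really sent; a correct
   processor votes for at most one block per view and never votes in a view it has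
   already nullified.  If b has n - f votes, then view(b) gets no nullification: the
   first correct voter of b to nullify view(b) can only do so in step (8), and its
   2f + 1 witnesses meet the voters of b in a correct processor that either nullified
   earlier or voted for two blocks of view(b).  Hence, following parents, every block
   of a higher view voted for by a correct processor descends from b, while two
   L-notarized blocks of the same view coincide by quorum intersection. *)

From Stdlib Require List.
From Stdlib Require Import Classical Lia.
From mathcomp Require Import all_boot zify.
Set Implicit Arguments. Unset Strict Implicit. Unset Printing Implicit Defensive.

Lemma ex_minimal (P : nat -> Prop) t :
  P t -> exists u, [/\ u <= t, P u & forall t', t' < u -> ~ P t'].
Proof.
elim/ltn_ind: t => t IHt Pt.
case: (classic (exists2 t', t' < t & P t')) => [[t' lt_t't /(IHt t' lt_t't)]|none].
  by case=> u [le_ut' Pu min_u]; exists u; split=> //; apply: leq_trans le_ut' (ltnW _).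
by exists t; split=> // t' lt_t't Pt'; apply: none; exists t'.
Qed.

Lemma In_mem (T : eqType) (x : T) (s : seq T) : List.In x s -> x \in s.
Proof. by elim: s => //= y s IHs [->|/IHs Hx]; rewrite inE ?eqxx ?Hx ?orbT. Qed.

Lemma foldl_finupd (Tx : eqType) (bs : seq (block Tx)) (L : seq Tx) :
  let L' := foldl (fun L b => finupd (chainTx b) L) L bs in
  L' = L \/ exists2 b, List.In b bs & L' = chainTx b.
Proof.
elim: bs L => [|b bs IHbs] L /=; first by left.
case: (IHbs (finupd (chainTx b) L)) => [->|[b' Hb' ->]]; last by right; exists b'; [right|].
by rewrite /finupd; case: ifP => _; [left|right; exists b; [left|]].
Qed.

Lemma quorum_intersection (bad : pred nat) (n f k1 k2 : nat) (P Q : nat -> Prop) :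
  count bad (iota 0 n) <= f -> n + f < k1 + k2 ->
  signers n P k1 -> signers n Q k2 -> exists k, [/\ k < n, ~~ bad k, P k & Q k].
Proof.
move=> Hbad Hk [J1 [U1 S1 A1 HP]] [J2 [U2 S2 A2 HQ]]; subst k1 k2.
have size_count J : uniq J -> all (fun j => j < n) J -> size J = count (mem J) (iota 0 n).
  move=> UJ AJ; rewrite -size_filter; apply/perm_size/uniq_perm => // [|x].
    exact: filter_uniq (iota_uniq 0 n).
  rewrite mem_filter mem_iota add0n /=.
  by case Jx: (x \in J); rewrite ?(allP AJ x Jx).
rewrite (size_count J1) // (size_count J2) // in Hk.
pose common := predI (mem J1) (mem J2).
have lt_f_common : f < count common (iota 0 n).
  rewrite -(ltn_add2l n); apply: leq_trans Hk _.
  rewrite -count_predUI leq_add2r -{2}(size_iota 0 n); exact: count_size.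
have /hasP [k] : has (predI common (predC bad)) (iota 0 n).
  rewrite has_count -(ltn_add2r f) add0n; apply: leq_trans lt_f_common _.
  apply: leq_trans (leq_add (leqnn _) Hbad); rewrite -count_predUI.
  by apply: leq_trans (leq_addr _ _); apply: sub_count => x /= ->; case: (bad x).
rewrite mem_iota => /andP [_ lt_kn] /andP [/andP [k1 k2] good_k].
by exists k; split; [| | apply: HP | apply: HQ].
Qed.

Scheme block_hash_ind := Induction for block Sort Prop
  with hash_block_ind := Induction for hashv Sort Prop.

Section Chains.

Variable Tx : eqType.
Implicit Types b : block Tx.

Lemma parent_ind (P : block Tx -> Prop) :
  (forall b, (forall b', parent b = Some b' -> P b') -> P b) -> forall b, P b.
Proof.
move=> IH; apply: (block_hash_ind (P0 := fun h => forall v tr, P (Blk v tr h))) => //.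
- by apply: IH.
- by move=> b Pb v tr; apply: IH => _ [<-].
- by move=> k v tr; apply: IH.
Qed.

Lemma anc_parent b b' : parent b = Some b' -> anc b = b :: anc b'.
Proof. by case: b => [|v tr [b0|k]] //= [<-]. Qed.

Lemma anc_self b : List.In b (anc b).
Proof. by case: b => [|v tr [b0|k]] /=; left. Qed.

Lemma anc_suffix b1 b2 : List.In b1 (anc b2) -> exists s, anc b2 = s ++ anc b1.
Proof.
elim/parent_ind: b2 => b2 IH.
case Hp: (parent b2) => [b'|].
  rewrite {1}(anc_parent Hp) => -[<-|/(IH b' Hp) [s Es]]; first by exists [::].
  by exists (b2 :: s); rewrite (anc_parent Hp) Es.
by case: b2 Hp {IH} => [|v tr [b0|k]] //= _ [<-|[]]; exists [::].
Qed.

Lemma undup_first_prefix (X Y : seq Tx) : prefix (undup_first X) (undup_first (X ++ Y)).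
Proof. by rewrite /undup_first rev_cat undup_cat rev_cat prefix_prefix. Qed.

Lemma chainTx_prefix b1 b2 : List.In b1 (anc b2) -> prefix (chainTx b1) (chainTx b2).
Proof.
case/anc_suffix=> s Es; rewrite /chainTx Es rev_cat map_cat flatten_cat.
exact: undup_first_prefix.
Qed.

End Chains.

(* The body of [slot] with its witnesses as section variables: [Sk] is S after
   step (k), and [S1] is S once the messages of the timeslot are received. *)
Section Step.

Variables (Tx : eqType) (n f : nat).
Variables (Delta i t : nat) (pre : lstate Tx) (R : seq (msg Tx)) (out : msg Tx -> Prop).
Variables (prop3 vote4 vote7 nt6 nt7 : option (block Tx)) (null5 null8 nd6 nd7 : bool).
Variables (v6 e6 v7 e7 : nat) (fl : seq (block Tx)).

Let v := lv pre.
Let old : iset Tx := fun x => t <> 0 /\ lS pre x.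
Let S1 : iset Tx := fun x => lS pre x \/ exists m, List.In m R /\ List.In x m.
Let S3 := addo S1 (omap (@IBlock Tx) prop3).
Let c4 := (exists b, valid n f S3 v b) /\ lnot pre = None /\ lnull pre = false.
Let nt4 := if vote4 is Some b then Some b else lnot pre.
Let nd5 := lnull pre || null5.
Let S5 := addo (addo S3 (omap (IVote i) vote4)) (if null5 then Some (INull Tx i v) else None).
Let c7 := exists b, view b = v6 /\ hasM n f S5 b.
Let S7 := addo S5 (omap (IVote i) vote7).
Let c8 := [/\ nd7 = false, isSome nt7 &
            signers n (fun j => S7 (INull Tx j v7) \/
                                exists b, [/\ S7 (IVote j b), view b = v7 & nt7 <> Some b])
                    (2 * f + 1)].
Let S8 := addo S7 (if null8 then Some (INull Tx i v7) else None).
Let pend := fun b => lpend pre b \/ (hasL n f S8 b /\ ~ hasL n f old b).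
Let post := {| lS := S8; lv := v7; lent := e7; lnull := nd7 || null8; lnot := nt7;
               lpend := fun b => pend b /\ ~ obtained S8 b;
               llog := foldl (fun L b => finupd (chainTx b) L) (llog pre) fl |}.

Hypothesis H4a : c4 -> exists b, valid n f S3 v b /\ vote4 = Some b.
Hypothesis H4b : ~ c4 -> vote4 = None.
Hypothesis H5 : null5 = [&& t - lent pre == 2 * Delta, ~~ lnull pre & ~~ isSome nt4].
Hypothesis H6a : hasN n f S5 v -> [/\ v6 = v.+1, e6 = t, nd6 = false & nt6 = None].
Hypothesis H6b : ~ hasN n f S5 v -> [/\ v6 = v, e6 = lent pre, nd6 = nd5 & nt6 = nt4].
Hypothesis H7a : c7 -> exists b, [/\ view b = v6, hasM n f S5 b,
            vote7 = (if ~~ isSome nt6 && ~~ nd6 then Some b else None),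
            v7 = v6.+1 & [/\ e7 = t, nd7 = false & nt7 = None]].
Hypothesis H7b : ~ c7 -> [/\ vote7 = None, v7 = v6, e7 = e6, nd7 = nd6 & nt7 = nt6].
Hypothesis H8b : ~ c8 -> null8 = false.
Hypothesis Hfl : forall b, List.In b fl <-> pend b /\ obtained S8 b.
Hypothesis Hout : forall m, out m <->
     out12 n f S1 old m \/
     (exists B, prop3 = Some B /\ m = [:: IBlock B]) \/
     (exists b, vote4 = Some b /\ m = [:: IVote i b]) \/
     (null5 /\ m = [:: INull Tx i v]) \/
     (exists b, vote7 = Some b /\ m = [:: IVote i b]) \/
     (null8 /\ m = [:: INull Tx i v7]).

Lemma step6_cases :
  [/\ v6 = v.+1, nd6 = false & nt6 = None] \/ [/\ v6 = v, nd6 = nd5 & nt6 = nt4].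
Proof using H6a H6b.
by case: (classic (hasN n f S5 v)) => [/H6a [-> _ -> ->]|/H6b [-> _ -> ->]]; [left|right].
Qed.

Lemma step7_cases :
  (v7 = v6.+1 /\ exists b, [/\ view b = v6, hasM n f S5 b &
     vote7 = (if ~~ isSome nt6 && ~~ nd6 then Some b else None)]) \/
  [/\ vote7 = None, v7 = v6, nd7 = nd6 & nt7 = nt6].
Proof using H7a H7b.
case: (classic c7) => [/H7a [b [? ? ? ? _]]|/H7b [? ? _ ? ?]]; last by right.
by left; split=> //; exists b.
Qed.

Lemma step_view_cases : (v7 = v /\ [/\ vote7 = None, nt7 = nt4 & nd7 = nd5]) \/ v < v7.
Proof using H6a H6b H7a H7b.
case: step6_cases => -[E6 Hnd Hnt]; case: step7_cases => [[E7 _]|[E7' E7 Ehd Eht]];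
  rewrite ?E7 E6 ?ltnSn ?ltnS ?leqnSn; try by right.
by left; rewrite E7' Ehd Eht Hnd Hnt.
Qed.

Lemma step_view_mono : v <= v7.
Proof using H6a H6b H7a H7b. by case: step_view_cases => [[->]|/ltnW]. Qed.

Lemma step_stay : v7 = v -> [/\ vote7 = None, nt7 = nt4 & nd7 = nd5].
Proof using H6a H6b H7a H7b.
by move=> Ev; case: step_view_cases => [[_ //]|]; rewrite Ev ltnn.
Qed.

Lemma step_vote4 b : vote4 = Some b ->
  [/\ valid n f S3 v b, lnot pre = None, lnull pre = false & (v7 = v -> nt7 = Some b)].
Proof using H4a H4b H6a H6b H7a H7b.
move=> E4; case: (classic c4) => [c|/H4b]; last by rewrite E4.
have [b' [Hb' E4']] := H4a c; rewrite E4 in E4'; case: E4' => <- in Hb'.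
case: c => _ [-> ->]; split=> // /step_stay [_ -> _]; by rewrite /nt4 E4.
Qed.

Lemma step_vote7 b : vote7 = Some b ->
  [/\ hasM n f S5 b, view b < v7, v <= view b &
      (view b = v -> [/\ lnot pre = None, lnull pre = false, vote4 = None & null5 = false])].
Proof using H6a H6b H7a H7b.
case: step7_cases => [[-> [b' [Hv HM ->]]]|[-> //]].
case: ifP => // Hfresh [<-]; rewrite Hv; split=> //.
  by case: step6_cases => -[-> _ _].
move=> Ev; case: step6_cases => -[E6 Hnd Hnt]; first by move/eqP: Ev; rewrite E6 gtn_eqF.
move: Hfresh; rewrite Hnd Hnt /nd5 /nt4.
by case: vote4 => //=; case: (lnot pre); case: (lnull pre); case: null5.
Qed.

Lemma step_null5 : null5 -> [/\ lnull pre = false, lnot pre = None & vote4 = None].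
Proof using H5.
rewrite H5 /nt4 => /and3P [_ /negbTE ->].
by case: vote4 => //=; case: (lnot pre).
Qed.

Lemma step_null8 : null8 -> exists b0, nt7 = Some b0 /\
  signers n (fun k => S7 (INull Tx k v7) \/
                      exists b, [/\ S7 (IVote k b), view b = v7 & b <> b0]) (2 * f + 1).
Proof using H8b.
move=> N8; have [_] : c8 by apply: NNPP => /H8b; rewrite N8.
case: nt7 => [b0|] // _ [J [UJ SJ AJ HJ]]; exists b0; split=> //.
exists J; split=> // k /HJ [?|[b [? ? Hb]]]; first by left.
by right; exists b; split=> // Eb; apply: Hb; rewrite Eb.
Qed.

Let own (x : item Tx) := (exists b, x = IVote i b /\ (vote4 = Some b \/ vote7 = Some b)) \/
  (null5 /\ x = INull Tx i v) \/ (null8 /\ x = INull Tx i v7).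

Lemma step_out m x : out m -> List.In x m -> [\/ S1 x, exists B, x = IBlock B | own x].
Proof using Hout.
move=> /Hout[O|[[B [_ ->]]|[[b [E ->]]|[[N ->]|[[b [E ->]]|[N ->]]]]]] /=; last 5 first.
- by case=> [<-|[]]; constructor 2; exists B.
- by case=> [<-|[]]; constructor 3; left; exists b; split; [|left].
- by case=> [<-|[]]; constructor 3; right; left.
- by case=> [<-|[]]; constructor 3; left; exists b; split; [|right].
- by case=> [<-|[]]; constructor 3; right; right.
move=> Hx; constructor 1.
case: O => [[w [J [_ _ [_ _ _ HJ _] Em]]]
          |[[b [J [_ _ [_ _ _ HJ _] Em]]]|[b [J [_ _ [_ _ _ HJ _] Em]]]]];
  by move: Hx; rewrite Em => /List.in_map_iff [j [<- /In_mem/HJ]].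
Qed.

Lemma step_sent x : own x -> out [:: x].
Proof using Hout.
move=> Hx; apply/Hout; do 2 right.
by case: Hx => [[b [-> [E|E]]]|[[N ->]|[N ->]]];
  [left; exists b | do 2 right; left; exists b | right; left | do 3 right].
Qed.

Lemma step_log : llog post = llog pre \/
  exists2 b, lpend pre b \/ hasL n f S8 b & llog post = chainTx b.
Proof using Hfl.
case: (foldl_finupd fl (llog pre)) => [|[b /Hfl [Hb _] E]]; [left|right] => //.
by exists b => //; case: Hb => [|[]]; [left|right].
Qed.

End Step.

Record step_trace (Tx : eqType) := Trace {
  vote4 : option (block Tx); vote7 : option (block Tx); null5 : bool; null8 : bool;
  S3 : iset Tx; S5 : iset Tx; S7 : iset Tx }.

Section StepSpec.

Variables (Tx : eqType) (n f i : nat).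

Definition received (pre : lstate Tx) (R : seq (msg Tx)) : iset Tx :=
  fun x => lS pre x \/ exists m, List.In m R /\ List.In x m.

Definition own_item (pre post : lstate Tx) (w : step_trace Tx) (x : item Tx) : Prop :=
  (exists b, x = IVote i b /\ (vote4 w = Some b \/ vote7 w = Some b)) \/
  (null5 w /\ x = INull Tx i (lv pre)) \/ (null8 w /\ x = INull Tx i (lv post)).

Record step_spec pre R post (out : msg Tx -> Prop) w : Prop := {
  spec_out m x : out m -> List.In x m ->
    [\/ received pre R x, exists B, x = IBlock B | own_item pre post w x];
  spec_sent x : own_item pre post w x -> out [:: x];
  spec_S3 x : S3 w x -> received pre R x \/ exists B, x = IBlock B;
  spec_S5 x : S5 w x -> [\/ S3 w x, exists2 b, vote4 w = Some b & x = IVote i b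
                           | null5 w /\ x = INull Tx i (lv pre)];
  spec_S7 x : S7 w x -> S5 w x \/ exists2 b, vote7 w = Some b & x = IVote i b;
  spec_S8 x : lS post x -> S7 w x \/ (null8 w /\ x = INull Tx i (lv post));
  spec_vote4 b : vote4 w = Some b ->
    [/\ valid n f (S3 w) (lv pre) b, lnot pre = None, lnull pre = false &
        (lv post = lv pre -> lnot post = Some b)];
  spec_vote7 b : vote7 w = Some b ->
    [/\ hasM n f (S5 w) b, view b < lv post, lv pre <= view b &
        (view b = lv pre ->
           [/\ lnot pre = None, lnull pre = false, vote4 w = None & null5 w = false])];
  spec_null5 : null5 w -> [/\ lnull pre = false, lnot pre = None & vote4 w = None];
  spec_null8 : null8 w -> lnull post /\ exists b0, lnot post = Some b0 /\
    signers n (fun k => S7 w (INull Tx k (lv post)) \/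
                        exists b, [/\ S7 w (IVote k b), view b = lv post & b <> b0]) (2 * f + 1);
  spec_view_mono : lv pre <= lv post;
  spec_stay : lv post = lv pre ->
    [/\ lnot post = (if vote4 w is Some b then Some b else lnot pre),
        lnull post = lnull pre || null5 w || null8 w & vote7 w = None];
  spec_pend b : lpend post b -> lpend pre b \/ hasL n f (lS post) b;
  spec_log : llog post = llog pre \/
    exists2 b, lpend pre b \/ hasL n f (lS post) b & llog post = chainTx b
}.

Lemma slot_spec lexlt Delta t pre R rtx post out :
  slot n f lexlt Delta i t pre R rtx post out -> exists w, step_spec pre R post out w.
Proof.
move=> [prop3 [vote4 [vote7 [null5 [null8 [nd6 [nd7 [nt6 [nt7 [v6 [e6 [v7 [e7 [fl]]]]]]]]]]]]]].
move=> [_ [H4a [H4b [H5 [H6a [H6b [H7a [H7b [_ [H8b [_ [Hfl [-> Hout]]]]]]]]]]]]].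
pose S3 := addo (received pre R) (omap (@IBlock Tx) prop3).
pose S5 := addo (addo S3 (omap (IVote i) vote4))
                (if null5 then Some (INull Tx i (lv pre)) else None).
exists (Trace vote4 vote7 null5 null8 S3 S5 (addo S5 (omap (IVote i) vote7))).
split=> /=.
- by apply: step_out; eassumption.
- by apply: step_sent; eassumption.
- by move=> x [|]; [left|case: (prop3) => //= B [<-]; right; exists B].
- by move=> x [[|]|]; [constructor 1|case: (vote4) => //= b [<-]; constructor 2; exists b
                     |case: (null5) => //= -[<-]; constructor 3].
- by move=> x [|]; [left|case: (vote7) => //= b [<-]; right; exists b].
- by move=> x [|]; [left|case: (null8) => //= -[<-]; right].
- by move=> b; apply: step_vote4; eassumption.
- by move=> b; apply: step_vote7; eassumption.
- by apply: step_null5; eassumption.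
- move=> N8; split; first by rewrite N8 orbT.
  by apply: step_null8; eassumption.
- by apply: step_view_mono; eassumption.
- by move=> Ev; have [-> -> ->] := step_stay H6a H6b H7a H7b Ev.
- by move=> b [[|[]]]; [left|right].
- by apply: step_log; eassumption.
Qed.

End StepSpec.

Section Execution.

Variables (Tx : eqType) (n f Delta : nat) (lexlt : block Tx -> block Tx -> Prop).
Variable E : execution Tx.
Hypothesis HE : is_execution n f lexlt Delta E.
Hypothesis n_gt_3f : 3 * f < n.

Implicit Types (j k t u : nat) (b : block Tx) (x : item Tx) (w : step_trace Tx).

Definition state_before j t : lstate Tx :=
  if t is t'.+1 then st E j t' else init_state Tx n.

Definition slot_run j t w :=
  step_spec n f j (state_before j t) (deliv E j t) (st E j t) (sent E j t) w.

Lemma slot_runP j t : correct n E j -> exists w, slot_run j t w.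
Proof. by case: HE => _ Hslot _ _ Hj; apply: slot_spec; apply: Hslot. Qed.

Definition sent_at j t x := exists2 m, sent E j t m & List.In x m.

(* What a correct receiver may assume of an item by unforgeability of
   signatures: correct processors sent their votes and nullifies before [t]
   (votes for the genesis block belong to every initial state). *)
Definition unforged t x : Prop :=
  match x with
  | IBlock _ => True
  | IVote k b => correct n E k -> b = Gen Tx \/ exists2 t', t' < t & sent_at k t' x
  | INull k _ => correct n E k -> exists2 t', t' < t & sent_at k t' x
  end.

Definition unforged_set t (S : iset Tx) := forall x, S x -> unforged t x.

Lemma unforged_mono t t' x : t <= t' -> unforged t x -> unforged t' x.
Proof.
move=> le_tt'; case: x => [b|k b|k v] //= H /H; last first.
  by case=> t0 lt_t0 s0; exists t0 => //; apply: leq_trans le_tt'.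
by case=> [|[t0 lt_t0 s0]]; [left|right; exists t0 => //; apply: leq_trans le_tt'].
Qed.

Lemma sent_beforeP k t x : sent_before E k t x -> exists2 t', t' < t & sent_at k t' x.
Proof. by case=> t' [m [lt_t' sent_m in_m]]; exists t' => //; exists m. Qed.

Lemma unforged_delivered j t m x :
  correct n E j -> List.In m (deliv E j t) -> List.In x m -> unforged t x.
Proof.
case: HE => _ _ _ Hauth Hj Hm Hx; have [_] := Hauth _ _ _ _ Hj Hm Hx.
case: x {Hx} => [b|k b|k v] //=.
- move=> [_ [_ H]] [_ ok_k]; case: H => [|[bad_k|/sent_beforeP]]; [by left| |by right].
  by rewrite bad_k in ok_k.
- move=> [_ H] [_ ok_k]; case: H => [bad_k|/sent_beforeP //].
  by rewrite bad_k in ok_k.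
Qed.

Lemma own_sent j t w x :
  slot_run j t w -> own_item j (state_before j t) (st E j t) w x -> sent_at j t x.
Proof. by move=> Hw Hx; exists [:: x]; [apply: (spec_sent Hw) | left]. Qed.

Lemma unforged_own j t w x :
  slot_run j t w -> own_item j (state_before j t) (st E j t) w x -> unforged t.+1 x.
Proof.
move=> Hw Hx; have := own_sent Hw Hx.
by case: Hx => [[b [-> _]]|[[_ ->]|[_ ->]]] Hs _ //=; [right|..]; exists t.
Qed.

Lemma unforged_received j t :
  correct n E j -> unforged_set t (lS (state_before j t)) ->
  unforged_set t (received (state_before j t) (deliv E j t)).
Proof. by move=> Hj Hpre x [/Hpre|[m [Hm Hx]]] //; apply: unforged_delivered Hm Hx. Qed.

Lemma unforged_trace j t w :
  slot_run j t w -> unforged_set t (received (state_before j t) (deliv E j t)) ->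
  [/\ unforged_set t.+1 (S3 w), unforged_set t.+1 (S5 w), unforged_set t.+1 (S7 w)
    & unforged_set t.+1 (lS (st E j t))].
Proof.
move=> Hw Hrec.
have own_ok x : own_item j (state_before j t) (st E j t) w x -> unforged t.+1 x.
  exact: unforged_own Hw.
have S3_ok : unforged_set t.+1 (S3 w).
  by move=> x /(spec_S3 Hw) [/Hrec/(unforged_mono (leqnSn t))|[B ->]].
have S5_ok : unforged_set t.+1 (S5 w).
  move=> x /(spec_S5 Hw) [/S3_ok //|[b E4 ->]|[N5 ->]]; apply: own_ok.
    by left; exists b; split; [|left].
  by right; left.
have S7_ok : unforged_set t.+1 (S7 w).
  move=> x /(spec_S7 Hw) [/S5_ok //|[b E7 ->]]; apply: own_ok.
  by left; exists b; split; [|right].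
split=> // x /(spec_S8 Hw) [/S7_ok //|[N8 ->]]; apply: own_ok.
by right; right.
Qed.

Lemma unforged_before j t : correct n E j -> unforged_set t (lS (state_before j t)).
Proof.
move=> Hj; elim: t => [|t IHt] x /=; first by case=> k _ -> _; left.
have [w Hw] := slot_runP t Hj.
by have [_ _ _] := unforged_trace Hw (unforged_received Hj IHt); apply.
Qed.

Lemma received_unforged j t :
  correct n E j -> unforged_set t (received (state_before j t) (deliv E j t)).
Proof. by move=> Hj; apply/unforged_received/unforged_before. Qed.

Lemma trace_unforged j t w : correct n E j -> slot_run j t w ->
  [/\ unforged_set t.+1 (S3 w), unforged_set t.+1 (S5 w) & unforged_set t.+1 (S7 w)].
Proof. by move=> Hj Hw; have [] := unforged_trace Hw (received_unforged Hj). Qed.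

Definition authored j x :=
  match x with
  | IBlock _ => False
  | IVote k b => k = j /\ b <> Gen Tx
  | INull k _ => k = j
  end.

Lemma first_sent_own j u w x : correct n E j -> authored j x -> slot_run j u w ->
  sent_at j u x -> (forall t, t < u -> ~ sent_at j t x) ->
  own_item j (state_before j u) (st E j u) w x.
Proof.
move=> Hj Ax Hw [m Hm Hx] first_u.
case: (spec_out Hw Hm Hx) => [/(received_unforged Hj)|[B Ex]|//]; last by rewrite Ex in Ax.
case: x Ax first_u {Hx} => [//|k b [-> not_gen]|k v ->] first_u /(_ Hj).
  by case=> [//|[t /first_u]].
by case=> t /first_u.
Qed.

Definition L_notarized b := exists k t, correct n E k /\ hasL n f (lS (st E k t)) b.

Record state_inv j t (s : lstate Tx) : Prop := {
  inv_view : 0 < lv s;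
  inv_votes t' b : t' < t -> sent_at j t' (IVote j b) ->
    view b < lv s \/ view b = lv s /\ lnot s = Some b;
  inv_nulls t' v : t' < t -> sent_at j t' (INull Tx j v) ->
    v < lv s \/ v = lv s /\ lnull s;
  inv_pending b : lpend s b -> L_notarized b;
  inv_log : llog s = [::] \/ exists2 b, L_notarized b & llog s = chainTx b
}.

Lemma view_step j t w : slot_run j t w ->
  let pre := state_before j t in let post := st E j t in
  lv pre < lv post \/
  [/\ lv post = lv pre, forall b, lnot pre = Some b -> lnot post = Some b &
      lnull pre -> lnull post].
Proof.
move=> Hw pre post; case: (ltngtP (lv pre) (lv post)) (spec_view_mono Hw) => // [|Ev] _.
  by left.
have [-> -> _] := spec_stay Hw (esym Ev); right; split=> // [b|-> //].
by case E4: (vote4 w) => [b4|] // Hb; have [_] := spec_vote4 Hw E4; rewrite Hb.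
Qed.

Lemma state_inv_step j t :
  correct n E j -> state_inv j t (state_before j t) -> state_inv j t.+1 (st E j t).
Proof.
move=> Hj Ipre; have [w Hw] := slot_runP t Hj.
set pre := state_before j t in Ipre Hw *; set post := st E j t in Hw *.
have view_pos : 0 < lv post by apply: leq_trans (inv_view Ipre) (spec_view_mono Hw).
have lift_vote b : view b < lv pre \/ view b = lv pre /\ lnot pre = Some b ->
                   view b < lv post \/ view b = lv post /\ lnot post = Some b.
  case=> [lt|[-> Hn]]; first by left; apply: leq_trans lt (spec_view_mono Hw).
  by case: (view_step Hw) => [?|[-> /(_ _ Hn) ? _]]; [left|right].
have lift_null v : v < lv pre \/ v = lv pre /\ lnull pre ->
                   v < lv post \/ v = lv post /\ lnull post.
  case=> [lt|[-> Hn]]; first by left; apply: leq_trans lt (spec_view_mono Hw).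
  by case: (view_step Hw) => [?|[-> _ /(_ Hn) ?]]; [left|right].
have sent_now x t' : t' < t.+1 -> sent_at j t' x -> t' < t \/
    [\/ received pre (deliv E j t) x, exists B, x = IBlock B | own_item j pre post w x].
  rewrite ltnS leq_eqVlt => /predU1P [-> [m Hm Hx]|]; last by left.
  by right; apply: (spec_out Hw Hm Hx).
split=> //.
- move=> t' b lt_t' Hs; case: (sent_now _ _ lt_t' Hs) => [|[]].
  + by move/(inv_votes Ipre)/(_ Hs)/lift_vote.
  + move/(received_unforged Hj)/(_ Hj) => [->|[t0 lt_t0 /(inv_votes Ipre lt_t0)/lift_vote //]].
    by left.
  + by case.
  + case=> [[b' [[<-] [E4|/(spec_vote7 Hw) [_ lt _ _]]]]|[[_ //]|[_ //]]]; last by left.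
    have [[_ Ev _ _] _ _ stay] := spec_vote4 Hw E4; rewrite Ev.
    by case: (view_step Hw) => [|[Eq _ _]]; [left|right; rewrite Eq stay].
- move=> t' v lt_t' Hs; case: (sent_now _ _ lt_t' Hs) => [|[]].
  + by move/(inv_nulls Ipre)/(_ Hs)/lift_null.
  + by move/(received_unforged Hj)/(_ Hj) => [t0 lt_t0 /(inv_nulls Ipre lt_t0)/lift_null].
  + by case.
  + case=> [[? [//]]|[[N5 [->]]|[N8 [->]]]]; last by right; case: (spec_null8 Hw N8).
    case: (view_step Hw) => [|[Eq _ _]]; [by left|right; split=> //].
    by have [_ -> _] := spec_stay Hw Eq; rewrite N5 orbT.
- by move=> b /(spec_pend Hw) [/(inv_pending Ipre)|HL] //; exists j, t.
- case: (spec_log Hw) => [->|[b Hb ->]]; first exact: inv_log Ipre.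
  by right; exists b => //; case: Hb => [/(inv_pending Ipre)|HL] //; exists j, t.
Qed.

Lemma state_inv_before j t : correct n E j -> state_inv j t (state_before j t).
Proof.
move=> Hj; elim: t => [|t IHt]; last exact: state_inv_step.
by split=> //=; left.
Qed.

Lemma state_inv_after j t : correct n E j -> state_inv j t.+1 (st E j t).
Proof. by move=> Hj; apply: state_inv_step; last apply: state_inv_before. Qed.

Definition voted j b := exists t, sent_at j t (IVote j b).

Lemma vote_origin j t b : correct n E j -> sent_at j t (IVote j b) -> b <> Gen Tx ->
  exists2 u, u <= t &
    sent_at j u (IVote j b) /\ forall w, slot_run j u w -> vote4 w = Some b \/ vote7 w = Some b.
Proof.
move=> Hj Hs not_gen.
have [u [le_ut Hu first_u]] := ex_minimal (P := fun u => sent_at j u (IVote j b)) Hs.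
exists u => //; split=> // w Hw.
have auth : authored j (IVote j b) by [].
by case: (first_sent_own Hj auth Hw Hu first_u) => [[b' [[<-]]]|[[_ //]|[_ //]]].
Qed.

Lemma new_vote_view j u w b : slot_run j u w ->
  vote4 w = Some b \/ vote7 w = Some b ->
  let pre := state_before j u in
  lv pre <= view b /\ (view b = lv pre -> lnot pre = None /\ lnull pre = false).
Proof.
move=> Hw N /=.
case: N => [/(spec_vote4 Hw) [[_ -> _ _] -> -> _]|/(spec_vote7 Hw) [_ _ le Heq]] //.
by split=> // /Heq [-> ->].
Qed.

Lemma new_vote_fresh j u w b : correct n E j -> slot_run j u w ->
  vote4 w = Some b \/ vote7 w = Some b ->
  (forall t b', t < u -> sent_at j t (IVote j b') -> view b' < view b) /\
  (forall t v, t < u -> sent_at j t (INull Tx j v) -> v < view b).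
Proof.
move=> Hj Hw /(new_vote_view Hw) [le Heq]; have Ipre := state_inv_before u Hj.
split=> [t b' lt_tu /(inv_votes Ipre lt_tu)|t v lt_tu /(inv_nulls Ipre lt_tu)].
- case=> [lt|[-> Hn]]; first exact: leq_trans lt le.
  by rewrite ltn_neqAle le andbT; apply/eqP => /esym/Heq [Hn']; rewrite Hn' in Hn.
- case=> [lt|[-> Hn]]; first exact: leq_trans lt le.
  by rewrite ltn_neqAle le andbT; apply/eqP => /esym/Heq [_ Hn']; rewrite Hn' in Hn.
Qed.

Lemma voted_view_pos j b : correct n E j -> voted j b -> b <> Gen Tx -> 0 < view b.
Proof.
move=> Hj [t Hs] not_gen; have [u _ [_ Hu]] := vote_origin Hj Hs not_gen.
have [w Hw] := slot_runP u Hj.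
have [le _] := new_vote_view Hw (Hu w Hw).
exact: leq_trans (inv_view (state_inv_before u Hj)) le.
Qed.

Lemma vote_unique j b1 b2 : correct n E j -> voted j b1 -> voted j b2 ->
  b1 <> Gen Tx -> b2 <> Gen Tx -> view b1 = view b2 -> b1 = b2.
Proof.
move=> Hj [t1 S1] [t2 S2] ng1 ng2.
have [u1 _ [U1 O1]] := vote_origin Hj S1 ng1; have [u2 _ [U2 O2]] := vote_origin Hj S2 ng2.
wlog le_u : b1 b2 u1 u2 U1 O1 U2 O2 {S1 S2 ng1 ng2 t1 t2} / u1 <= u2.
  move=> W; case: (leqP u1 u2) => [|/ltnW le]; first exact: W.
  by move=> Ev; apply/esym/(W b2 b1 u2 u1).
have [w Hw] := slot_runP u2 Hj; have N2 := O2 w Hw.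
case: (ltngtP u1 u2) le_u => // [lt_u _|Eu _] Ev; last subst u2.
  by have [/(_ u1 b1 lt_u U1)] := new_vote_fresh Hj Hw N2; rewrite Ev ltnn.
have N1 := O1 w Hw.
have mixed b b' : vote4 w = Some b -> vote7 w = Some b' -> view b <> view b'.
  move=> E4 /(spec_vote7 Hw) [_ _ _ H] Evv.
  have [[_ Ev4 _ _] _ _ _] := spec_vote4 Hw E4.
  by have [_ _ N4 _] := H (etrans (esym Evv) Ev4); rewrite N4 in E4.
case: N1 N2 => [E1 [E2|E2]|E1 [E2|E2]].
- by move: E2; rewrite E1 => -[].
- by case: (mixed _ _ E1 E2 Ev).
- by case: (mixed _ _ E2 E1 (esym Ev)).
- by move: E2; rewrite E1 => -[].
Qed.

Lemma correct_in_quorums (P Q : nat -> Prop) k1 k2 : n + f < k1 + k2 ->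
  signers n P k1 -> signers n Q k2 -> exists k, [/\ correct n E k, P k & Q k].
Proof.
case: HE => count_bad _ _ _ Hk SP SQ.
by have [k [lt_kn ok_k Pk Qk]] := quorum_intersection count_bad Hk SP SQ; exists k.
Qed.

Lemma correct_in_quorum (P : nat -> Prop) k : f < k -> signers n P k ->
  exists k, correct n E k /\ P k.
Proof.
move=> lt_fk SP.
have all_n : signers n (fun => True) n.
  exists (iota 0 n); rewrite iota_uniq size_iota; split=> //.
  by apply/allP => j; rewrite mem_iota.
have [|j [Hj Pj _]] := correct_in_quorums _ SP all_n; first by rewrite addnC ltn_add2r.
by exists j.
Qed.

Definition backed b k := signers n (fun j => correct n E j -> voted j b) k.

Lemma voter_null_current j t w b : correct n E j -> voted j b -> b <> Gen Tx ->
  slot_run j t w ->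
  [/\ null5 w -> view b <> lv (state_before j t) &
      null8 w -> view b = lv (st E j t) -> lnot (st E j t) = Some b].
Proof.
move=> Hj [t' Hs] not_gen Hw; have [u _ [Hu Ou]] := vote_origin Hj Hs not_gen.
case: (ltnP t u) => [lt_tu|le_ut].
  have [w' Hw'] := slot_runP u Hj; have [_ fresh] := new_vote_fresh Hj Hw' (Ou w' Hw').
  have null_now v : v = view b ->
      ~ own_item j (state_before j t) (st E j t) w (INull Tx j v).
    by move=> -> /(own_sent Hw)/(fresh t _ lt_tu); rewrite ltnn.
  by split=> N Ev; case: (null_now _ (esym Ev)); right; [left|right].
split=> [N5 Ev|N8 Ev].
  have [_ Hnot E4] := spec_null5 Hw N5.
  case: (ltngtP u t) le_ut => // [lt_ut _|Eu _].
    have := inv_votes (state_inv_before t Hj) lt_ut Hu; rewrite Ev ltnn Hnot.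
    by case=> [|[]].
  subst u; case: (Ou w Hw) => [|/(spec_vote7 Hw) [_ _ _ /(_ Ev) [_ _ _]]]; first by rewrite E4.
  by rewrite N5.
have := inv_votes (state_inv_after t Hj) (leq_ltn_trans le_ut (ltnSn t)) Hu.
by rewrite Ev ltnn => -[|[]].
Qed.

Lemma trace_null_origin j t w k v : slot_run j t w -> S7 w (INull Tx k v) ->
  received (state_before j t) (deliv E j t) (INull Tx k v) \/
  [/\ null5 w, k = j & v = lv (state_before j t)].
Proof.
move=> Hw /(spec_S7 Hw) [/(spec_S5 Hw) [/(spec_S3 Hw) [?|[? //]]|[? ? //]|[N5 [-> ->]]]|[? ? //]].
  by left.
by right.
Qed.

Lemma voters_never_nullify b : backed b (n - f) -> b <> Gen Tx ->
  forall t j, correct n E j -> voted j b -> ~ sent_at j t (INull Tx j (view b)).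
Proof.
move=> Bb not_gen; elim/ltn_ind=> t IHt j Hj Vj [m Hm Hx].
have [w Hw] := slot_runP t Hj.
have [no5 null8_not] := voter_null_current Hj Vj not_gen Hw.
case: (spec_out Hw Hm Hx) => [/(received_unforged Hj)/(_ Hj) [t' lt_t']|[? //]|].
  exact: IHt.
case=> [[? [//]]|[[N5 [Ev]]|[N8 [Ev]]]]; first exact: no5 N5 Ev.
have [_ [b0 [Hnot S_null]]] := spec_null8 Hw N8.
rewrite null8_not // in Hnot; case: Hnot S_null => <- S_null.
have [|k [Hk Vk [HN|[b' [Vb' Ev' ne_b']]]]] := correct_in_quorums _ Bb S_null; first lia.
- case: (trace_null_origin Hw HN) => [/(received_unforged Hj)/(_ Hk) [t' lt_t']|[N5 Ekj Ev5]].
    by rewrite -Ev; apply: IHt (Vk Hk).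
  exact: no5 N5 (etrans Ev Ev5).
- have b'_not_gen : b' <> Gen Tx.
    by move=> Eg; have := voted_view_pos Hj Vj not_gen; rewrite Ev -Ev' Eg.
  have [_ _ /(_ _ Vb' Hk) [//|[t' _ Sb']]] := trace_unforged Hj Hw.
  apply/ne_b'/esym/(vote_unique Hk (Vk Hk) (ex_intro _ t' Sb')) => //.
  by rewrite Ev Ev'.
Qed.

Definition nullified j v := exists t, sent_at j t (INull Tx j v).

Lemma backed_not_nullified b : backed b (n - f) -> b <> Gen Tx ->
  ~ signers n (fun j => correct n E j -> nullified j (view b)) (2 * f + 1).
Proof.
move=> Bb not_gen SN.
have [|k [Hk Vk Nk]] := correct_in_quorums _ Bb SN; first lia.
by have [t] := Nk Hk; apply: voters_never_nullify (Vk Hk).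
Qed.

Lemma unforged_backed t (S : iset Tx) b k : unforged_set t S -> b <> Gen Tx ->
  signers n (fun j => S (IVote j b)) k -> backed b k.
Proof.
move=> US not_gen [J [UJ SJ AJ HJ]]; exists J; split=> // j /HJ /US /[apply].
by case=> [//|[t' _ Hs]]; exists t'.
Qed.

Lemma backed_view_pos b : backed b (n - f) -> b <> Gen Tx -> 0 < view b.
Proof.
move=> Bb not_gen; have [|k [Hk Vk]] := correct_in_quorum _ Bb; first lia.
exact: voted_view_pos Hk (Vk Hk) not_gen.
Qed.

Definition validated b := exists t (S : iset Tx), unforged_set t S /\ valid n f S (view b) b.

Lemma voted_validated j b : correct n E j -> voted j b -> b <> Gen Tx -> validated b.
Proof.
move=> Hj [t]; elim/ltn_ind: t j Hj => t IHt j Hj Hs not_gen.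
have [u le_ut [_ Ou]] := vote_origin Hj Hs not_gen.
have [w Hw] := slot_runP u Hj; have [US3 _ _] := trace_unforged Hj Hw.
have from4 : vote4 w = Some b -> validated b.
  by case/(spec_vote4 Hw) => Hv _ _ _; exists u.+1, (S3 w); case: (Hv) => _ ->.
case: (Ou w Hw) => [/from4 //|/(spec_vote7 Hw) [HM _ _ _]].
have [|k [Hk /(spec_S5 Hw) Sk]] := correct_in_quorum _ HM; first lia.
case: Sk => [/(spec_S3 Hw) [|[? //]]|[b' E4 [_ Eb]]|[_ //]]; last by apply: from4; rewrite E4 Eb.
case/(received_unforged Hj)/(_ Hk) => [//|[t' lt_t' Hs']].
exact: IHt (leq_trans lt_t' le_ut) k Hk Hs' not_gen.
Qed.

Lemma backed_ancestor b1 b : backed b1 (n - f) -> b1 <> Gen Tx ->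
  validated b -> view b1 < view b -> List.In b1 (anc b).
Proof.
move=> B1 ng1; elim/parent_ind: b => b IH [t [S [US [_ _ _ [b'' [Hp HM HN]]]]]] lt_b1b.
rewrite (anc_parent Hp); right.
have ng'' : 0 < view b'' -> b'' <> Gen Tx by move=> + Eg; rewrite Eg.
have pos1 := backed_view_pos B1 ng1.
case: (ltngtP (view b'') (view b1)) => [lt|gt|eq].
- case: (backed_not_nullified B1 ng1).
  have [J [UJ SJ AJ HJ]] := HN _ (introT andP (conj lt lt_b1b)).
  by exists J; split=> // j /HJ /US /[apply] -[t' _ Hs]; exists t'.
- have ng := ng'' (leq_ltn_trans (leq0n _) gt).
  have [|k [Hk /US /(_ Hk) [//|[t' _ Hs]]]] := correct_in_quorum _ HM; first lia.
  exact: IH b'' Hp (voted_validated Hk (ex_intro _ t' Hs) ng) gt.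
- have ng : b'' <> Gen Tx by apply: ng''; rewrite eq.
  have [|k [Hk V1 V'']] := correct_in_quorums _ B1 (unforged_backed US ng HM); first lia.
  by rewrite (vote_unique Hk (V1 Hk) (V'' Hk) ng1 ng (esym eq)); apply: anc_self.
Qed.

Lemma L_notarized_backed b : L_notarized b -> b <> Gen Tx -> backed b (n - f).
Proof.
case=> k [t [Hk HL]] ng; have US : unforged_set t.+1 (lS (st E k t)) := unforged_before Hk.
exact: unforged_backed US ng HL.
Qed.

Lemma L_notarized_chains b1 b2 : L_notarized b1 -> L_notarized b2 ->
  prefix (chainTx b1) (chainTx b2) \/ prefix (chainTx b2) (chainTx b1).
Proof.
wlog le_12 : b1 b2 / view b1 <= view b2.
  move=> W L1 L2; case: (leqP (view b1) (view b2)) => [le|/ltnW le]; first exact: W.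
  by case: (W b2 b1 le L2 L1); [right|left].
move=> L1 L2; case: (classic (b1 = Gen Tx)) => [->|ng1]; first by left; apply: prefix0s.
case: (classic (b2 = Gen Tx)) => [->|ng2]; first by right; apply: prefix0s.
have B1 := L_notarized_backed L1 ng1; have B2 := L_notarized_backed L2 ng2.
left; apply: chainTx_prefix; case: (ltngtP (view b1) (view b2)) le_12 => // [lt _|eq _].
  have [|k [Hk Vk]] := correct_in_quorum _ B2; first lia.
  exact: backed_ancestor B1 ng1 (voted_validated Hk (Vk Hk) ng2) lt.
have [|k [Hk V1 V2]] := correct_in_quorums _ B1 B2; first lia.
by rewrite (vote_unique Hk (V1 Hk) (V2 Hk) ng1 ng2 eq); apply: anc_self.
Qed.

End Execution.

Theorem lemma4 (Tx : eqType) (n f Delta : nat)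
    (lexlt : block Tx -> block Tx -> Prop) (E : execution Tx) :
  5 * f + 1 <= n ->
  strict_total_order lexlt ->
  is_execution n f lexlt Delta E ->
  forall i j t t', correct n E i -> correct n E j ->
    prefix (llog (st E i t)) (llog (st E j t')) \/
    prefix (llog (st E j t')) (llog (st E i t)).
Proof.
(* [lexlt] only decides which parent a leader extends; safety does not use it. *)
move=> n_ge_5f1 _ HE i j t t' Hi Hj; have n_gt_3f : 3 * f < n by lia.
case: (inv_log (state_inv_after HE t Hi)) => [->|[b1 L1 ->]]; first by left; apply: prefix0s.
case: (inv_log (state_inv_after HE t' Hj)) => [->|[b2 L2 ->]]; first by right; apply: prefix0s.
exact: (L_notarized_chains HE n_gt_3f L1 L2).
Qed.
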